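(* (1) Let $(Y^*,Y,X)$ be random variables with $Y^*,Y\in\{0,1\}$, $X=(\tilde X,Z)\in\mathcal X$, $\tilde X\in\tilde{\mathcal X}$, $Z$ taking values in a finite set $\mathcal Z$. Let $p(x)=\Pr(Y=1\mid X=x)$, $p^*(x)=\Pr(Y^*=1\mid X=x)$, $\underline p_z(\tilde x)=\inf_{z\in\mathcal Z}p(\tilde x,z)$, $\bar p_z(\tilde x)=\sup_{z\in\mathcal Z}p(\tilde x,z)$. Assume: for all $x=(\tilde x,z)$ and $y\in\{0,1\}$, $\Pr(Y=1-y\mid Y^*=y,X=x)=\Pr(Y=1-y\mid Y^*=y,\tilde X=\tilde x)$; for all $\tilde x$, $\Pr(Y=0\mid Y^*=1,\tilde x)+\Pr(Y=1\mid Y^*=0,\tilde x)\le1$; for all $\tilde x$, $\bar p_z(\tilde x)>0$ and $\underline p_z(\tilde x)<1$; and there are known constants $\bar\alpha_0,\bar\alpha_1\in[0,1]$ with $\Pr(Y=1-y\mid Y^*=y,\tilde x)\le\bar\alpha_y$ for $y\in\{0,1\}$ and all $\tilde x$. Then for every $x=(\tilde x,z)\in\mathcal X$, $$p^*(x)\in\left[\frac{p(x)-\min\{\underline p_z(\tilde x),\bar\alpha_0\}}{1-\min\{\underline p_z(\tilde x),\bar\alpha_0\}},\ \frac{p(x)}{\max\{\bar p_z(\tilde x),1-\bar\alpha_1\}}\right].$$ (2) Let $(Y^*,Y,X,W)$ be random variables with $Y^*,Y\in\{0,1\}$, $X\in\mathcal X$, $W$ taking values in a finite set of reals $\mathcal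 W$. Let $p^*(x)=\Pr(Y^*=1\mid X=x)$, $p_W(x,w)=\Pr(Y=1\mid X=x,W=w)$, $\underline p_w(x,w)=\inf_{\tilde w\le w}p_W(x,\tilde w)$, $\bar p_w(x,w)=\sup_{\tilde w\le w}p_W(x,\tilde w)$ (over $\tilde w\in\mathcal W$). Assume: $\Pr(Y^*=1\mid x,w)=p^*(x)$ for all $x,w$; for all $x$, $y\in\{0,1\}$ and $w_1>w_2$ in $\mathcal W$, $\Pr(Y=1-y\mid Y^*=y,x,w_1)\le\Pr(Y=1-y\mid Y^*=y,x,w_2)$; for all $x,w$, $\Pr(Y=1\mid Y^*=0,x,w)+\Pr(Y=0\mid Y^*=1,x,w)\le1$ and $0<p_W(x,w)<1$; and there are known constants $\bar\alpha_0,\bar\alpha_1\in[0,1]$ with $\Pr(Y=1-y\mid Y^*=y,x,w)\le\bar\alpha_y$ for $y\in\{0,1\}$ and all $(x,w)$. Then for every $x\in\mathcal X$, $$p^*(x)\in\left[\sup_{w\in\mathcal W}\left\{\frac{p_W(x,w)-\min\{\underline p_w(x,w),\bar\alpha_0\}}{1-\min\{\underline p_w(x,w),\bar\alpha_0\}}\right\},\ \inf_{w\in\mathcal W}\left\{\frac{p_W(x,w)}{\max\{\bar p_w(x,w),1-\bar\alpha_1\}}\right\}\right].$$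
   Context: $Y^*$ is the true (unobserved) binary outcome and $Y$ the observed, possibly misreported outcome; conditioning on $\tilde x$ (resp. $x,w$) means conditioning on $\tilde X=\tilde x$ (resp. $X=x,W=w$). *)

From HB Require Import structures.
From mathcomp Require Import all_boot all_order all_algebra.
From mathcomp Require Import boolp classical_sets cardinality reals.
Set Implicit Arguments. Unset Strict Implicit. Unset Printing Implicit Defensive.
Import Order.TTheory GRing.Theory Num.Theory.
Local Open Scope ring_scope.

(* Conditional law of (Y*, Y) given a fixed value of the covariates,
   described by ps = Pr(Y* = 1 | .) and the misclassification kernel
   e y = Pr(Y = 1 - y | Y* = y, .) :  jointYY ps e ys y = Pr(Y* = ys, Y = y | .) *)
Definition jointYY {R : realType} (ps : R) (e : bool -> R) (ys y : bool) : R :=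
  (if ys then ps else 1 - ps) * (if y == ys then 1 - e ys else e ys).

Definition prY1 {R : realType} (ps : R) (e : bool -> R) : R :=
  \sum_(ys : bool) jointYY ps e ys true.

Definition p1 {R : realType} {Xt Z : Type} (ps : Xt -> Z -> R)
  (e : bool -> Xt -> Z -> R) (xt : Xt) (z : Z) : R :=
  prY1 (ps xt z) (fun y => e y xt z).

Definition pW {R : realType} {X : Type} (psW : X -> R -> R)
  (e : bool -> X -> R -> R) (x : X) (w : R) : R :=
  prY1 (psW x w) (fun y => e y x w).

From HB Require Import structures.
From mathcomp Require Import all_boot all_order all_algebra.
From mathcomp Require Import boolp classical_sets cardinality reals.
From mathcomp Require Import lra.

Set Implicit Arguments.
Unset Strict Implicit.
Unset Printing Implicit Defensive.
Import Order.TTheory GRing.Theory Num.Theory.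
Local Open Scope ring_scope.
Local Open Scope classical_set_scope.

(* With error rates a0 = Pr(Y=1 | Y*=0) and a1 = Pr(Y=0 | Y*=1), the observed
   p = ps (1 - a1) + (1 - ps) a0 is a convex combination of a0 <= 1 - a1, so
   a0 <= p <= 1 - a1 at every covariate value.  Inverting the mixture gives
   (p - m) / (1 - m) <= ps for any m in [a0, 1] and ps <= p / M for any M in
   (0, 1 - a1].  When a0 is the same for all z (part 1), or can only decrease
   as w grows (part 2), every observed p(., z), resp. p_W(., v) with v <= w,
   is at least a0, so m := min(inf p, abar0) is admissible; symmetrically
   M := max(sup p, 1 - abar1) is. *)

Section MisclassifiedMixture.
Variables (R : realType) (ps : R) (e : bool -> R).
Hypotheses (ps01 : 0 <= ps <= 1) (e_ge0 : forall y, 0 <= e y).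

Lemma prY1E : prY1 ps e = ps * (1 - e true) + (1 - ps) * e false.
Proof. by rewrite /prY1 big_bool /jointYY. Qed.

Lemma err0_le_prY1 : e false + e true <= 1 -> e false <= prY1 ps e.
Proof.
move=> e_sum; have [ps_ge0 ps_le1] := andP ps01; rewrite prY1E.
have : 0 <= ps * (1 - e true - e false) by apply: mulr_ge0; lra.
lra.
Qed.

Lemma prY1_le_err1 : e false + e true <= 1 -> prY1 ps e <= 1 - e true.
Proof.
move=> e_sum; have [ps_ge0 ps_le1] := andP ps01; rewrite prY1E.
have : 0 <= (1 - ps) * (1 - e true - e false) by apply: mulr_ge0; lra.
lra.
Qed.

Lemma corrected_prY1_le m : e false <= m -> m <= 1 ->
  (prY1 ps e - m) / (1 - m) <= ps.
Proof.
move=> e0_le_m m_le1; have [ps_ge0 ps_le1] := andP ps01.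
(* At m = 1 the left-hand side is the junk value 0. *)
have [->|m_neq1] := eqVneq m 1; first by rewrite subrr invr0 mulr0; lra.
rewrite ler_pdivrMr ?prY1E; last by rewrite subr_gt0 lt_neqAle m_neq1.
have e1_ge0 := e_ge0 true.
have : 0 <= ps * e true + (1 - ps) * (m - e false).
  by apply: addr_ge0; apply: mulr_ge0; lra.
lra.
Qed.

Lemma le_rescaled_prY1 M : 0 < M -> M <= 1 - e true -> ps <= prY1 ps e / M.
Proof.
move=> M_gt0 M_le; have [ps_ge0 ps_le1] := andP ps01.
rewrite ler_pdivlMr // prY1E.
have : ps * M <= ps * (1 - e true) by apply: ler_wpM2l; lra.
have e0_ge0 := e_ge0 false.
have : 0 <= (1 - ps) * e false by apply: mulr_ge0; lra.
lra.
Qed.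

Lemma prY1_bounds lo hi abar0 abar1 :
  e false <= lo -> e false <= abar0 <= 1 -> 0 < hi -> hi <= 1 - e true ->
  e true <= abar1 ->
  (prY1 ps e - Order.min lo abar0) / (1 - Order.min lo abar0) <= ps /\
  ps <= prY1 ps e / Order.max hi (1 - abar1).
Proof.
move=> e0_le_lo /andP[e0_le_abar0 abar0_le1] hi_gt0 hi_le e1_le_abar1; split.
- apply: corrected_prY1_le; first by rewrite le_min e0_le_lo.
  by rewrite ge_min abar0_le1 orbT.
- apply: le_rescaled_prY1; first by rewrite lt_max hi_gt0.
  by rewrite ge_max hi_le /=; lra.
Qed.

End MisclassifiedMixture.

Section ExcludedInstrument.
Variables (R : realType) (Xt : Type) (Z : finType) (ps : Xt -> Z -> R).
Variables (e : bool -> Xt -> Z -> R) (a : bool -> Xt -> R).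
Hypotheses (ps01 : forall xt z, 0 <= ps xt z <= 1).
Hypotheses (a_ge0 : forall y xt, 0 <= a y xt).
Hypotheses (e_a : forall xt z y, e y xt z = a y xt).
Hypotheses (a_sum : forall xt, a true xt + a false xt <= 1).

Lemma p1E xt (z : Z) : p1 ps e xt z = prY1 (ps xt z) (a^~ xt).
Proof. by rewrite /p1; under eq_fun do rewrite e_a. Qed.

Lemma err0_le_inf_p1 xt (z : Z) : a false xt <= inf (range (p1 ps e xt)).
Proof.
apply: lb_le_inf; first by exists (p1 ps e xt z), z.
move=> _ [z' _ <-]; rewrite p1E.
by apply: err0_le_prY1 => //; rewrite addrC.
Qed.

Lemma sup_p1_le_err1 xt (z : Z) : sup (range (p1 ps e xt)) <= 1 - a true xt.
Proof.
apply: ge_sup; first by exists (p1 ps e xt z), z.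
move=> _ [z' _ <-]; rewrite p1E.
by apply: prY1_le_err1 => //; rewrite addrC.
Qed.

Lemma p1_bounds abar0 abar1 xt (z : Z) :
  0 < sup (range (p1 ps e xt)) -> 0 <= abar0 <= 1 ->
  a false xt <= abar0 -> a true xt <= abar1 ->
  let m := Order.min (inf (range (p1 ps e xt))) abar0 in
  (p1 ps e xt z - m) / (1 - m) <= ps xt z /\
  ps xt z <= p1 ps e xt z / Order.max (sup (range (p1 ps e xt))) (1 - abar1).
Proof.
move=> sup_gt0 /andP[_ abar0_le1] a0_le a1_le; rewrite p1E.
apply: prY1_bounds => //.
- exact: err0_le_inf_p1.
- by rewrite a0_le.
- exact: sup_p1_le_err1.
Qed.

End ExcludedInstrument.

Section MonotoneInstrument.
Variables (R : realType) (X : Type) (W : set R) (ps : X -> R).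
Variables (psW : X -> R -> R) (e : bool -> X -> R -> R).
Hypotheses (ps01 : forall x, 0 <= ps x <= 1).
Hypotheses (e_ge0 : forall y x w, W w -> 0 <= e y x w).
Hypotheses (psW_ps : forall x w, W w -> psW x w = ps x).
Hypotheses (e_decr : forall y x w1 w2,
  W w1 -> W w2 -> w2 < w1 -> e y x w1 <= e y x w2).
Hypotheses (e_sum : forall x w, W w -> e false x w + e true x w <= 1).

Local Notation pW_below x w :=
  [set pW psW e x v | v in [set v | W v /\ v <= w]].

Lemma pWE x w : W w -> pW psW e x w = prY1 (ps x) (fun y => e y x w).
Proof. by move=> Ww; rewrite /pW psW_ps. Qed.

Lemma err_nonincreasing y x w v : W w -> W v -> v <= w -> e y x w <= e y x v.
Proof.
move=> Ww Wv; rewrite le_eqVlt => /predU1P[-> // | v_lt_w].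
exact: e_decr.
Qed.

Lemma err0_le_inf_pW x w : W w -> e false x w <= inf (pW_below x w).
Proof.
move=> Ww; apply: lb_le_inf; first by exists (pW psW e x w), w.
move=> _ [v [Wv v_le_w] <-].
apply: (le_trans (err_nonincreasing false x Ww Wv v_le_w)).
by rewrite pWE //; apply: err0_le_prY1 (ps01 x) (e_sum x Wv).
Qed.

Lemma sup_pW_le_err1 x w : W w -> sup (pW_below x w) <= 1 - e true x w.
Proof.
move=> Ww; apply: ge_sup; first by exists (pW psW e x w), w.
move=> _ [v [Wv v_le_w] <-]; rewrite pWE //.
apply: (le_trans (prY1_le_err1 (ps01 x) (e_sum x Wv))).
by rewrite lerD2l lerN2 err_nonincreasing.
Qed.

Hypothesis pW01 : forall x w, W w -> 0 < pW psW e x w < 1.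

Lemma sup_pW_gt0 x w : W w -> 0 < sup (pW_below x w).
Proof.
move=> Ww; case/andP: (pW01 x Ww) => pW_gt0 _; apply: (lt_le_trans pW_gt0).
apply: ub_le_sup; last by exists w.
by exists 1 => _ [v [Wv _] <-]; case/andP: (pW01 x Wv) => _ /ltW.
Qed.

Lemma pW_bounds abar0 abar1 x : W !=set0 -> 0 <= abar0 <= 1 ->
  (forall w, W w -> e false x w <= abar0) ->
  (forall w, W w -> e true x w <= abar1) ->
  let plow w := inf (pW_below x w) in
  let pup w := sup (pW_below x w) in
  sup [set (pW psW e x w - Order.min (plow w) abar0) /
           (1 - Order.min (plow w) abar0) | w in W] <= ps x /\
  ps x <= inf [set pW psW e x w / Order.max (pup w) (1 - abar1) | w in W].
Proof.
move=> [w0 Ww0] /andP[_ abar0_le1] e0_le e1_le plow pup.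
have bounds w : W w ->
    (pW psW e x w - Order.min (plow w) abar0) / (1 - Order.min (plow w) abar0)
      <= ps x /\
    ps x <= pW psW e x w / Order.max (pup w) (1 - abar1).
  move=> Ww; rewrite pWE //; apply: prY1_bounds => //.
  - by move=> y; apply: e_ge0.
  - exact: err0_le_inf_pW.
  - by rewrite e0_le.
  - exact: sup_pW_gt0.
  - exact: sup_pW_le_err1.
  - exact: e1_le.
split.
- apply: ge_sup; first by eexists; exists w0.
  by move=> _ [w Ww <-]; case: (bounds w Ww).
- apply: lb_le_inf; first by eexists; exists w0.
  by move=> _ [w Ww <-]; case: (bounds w Ww).
Qed.

End MonotoneInstrument.

Theorem proposition4 (R : realType) :
  (* Part (1) *)
  (forall (Xt : Type) (Z : finType)
     (ps : Xt -> Z -> R)            (* p*(x~,z) = Pr(Y*=1 | X=(x~,z)) *)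
     (e : bool -> Xt -> Z -> R)     (* e y x~ z = Pr(Y=1-y | Y*=y, X=(x~,z)) *)
     (a : bool -> Xt -> R)          (* a y x~  = Pr(Y=1-y | Y*=y, X~=x~) *)
     (abar0 abar1 : R),
     (forall xt z, 0 <= ps xt z <= 1) ->
     (forall y xt z, 0 <= e y xt z <= 1) ->
     (forall y xt, 0 <= a y xt <= 1) ->
     (forall xt z y, e y xt z = a y xt) ->
     (forall xt, a true xt + a false xt <= 1) ->
     (forall xt, 0 < sup (range (fun z => p1 ps e xt z))) ->
     (forall xt, inf (range (fun z => p1 ps e xt z)) < 1) ->
     0 <= abar0 <= 1 -> 0 <= abar1 <= 1 ->
     (forall xt, a false xt <= abar0) ->
     (forall xt, a true xt <= abar1) ->
     forall xt z,
       let m := Order.min (inf (range (fun z' => p1 ps e xt z'))) abar0 in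
       (p1 ps e xt z - m) / (1 - m) <= ps xt z /\
       ps xt z <= p1 ps e xt z /
                  Order.max (sup (range (fun z' => p1 ps e xt z'))) (1 - abar1))
  /\
  (* Part (2) *)
  (forall (X : Type) (W : set R)
     (ps : X -> R)                  (* p*(x) = Pr(Y*=1 | X=x) *)
     (psW : X -> R -> R)            (* Pr(Y*=1 | X=x, W=w) *)
     (e : bool -> X -> R -> R)      (* e y x w = Pr(Y=1-y | Y*=y, X=x, W=w) *)
     (abar0 abar1 : R),
     finite_set W -> W !=set0 ->
     (forall x, 0 <= ps x <= 1) ->
     (forall x w, W w -> 0 <= psW x w <= 1) ->
     (forall y x w, W w -> 0 <= e y x w <= 1) ->
     (forall x w, W w -> psW x w = ps x) ->
     (forall y x w1 w2, W w1 -> W w2 -> w2 < w1 -> e y x w1 <= e y x w2) ->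
     (forall x w, W w -> e false x w + e true x w <= 1) ->
     (forall x w, W w -> 0 < pW psW e x w < 1) ->
     0 <= abar0 <= 1 -> 0 <= abar1 <= 1 ->
     (forall x w, W w -> e false x w <= abar0) ->
     (forall x w, W w -> e true x w <= abar1) ->
     forall x,
       let plow w := inf [set pW psW e x v | v in [set v | W v /\ v <= w]] in
       let pup  w := sup [set pW psW e x v | v in [set v | W v /\ v <= w]] in
       sup [set (pW psW e x w - Order.min (plow w) abar0) /
                (1 - Order.min (plow w) abar0) | w in W] <= ps x /\
       ps x <= inf [set pW psW e x w / Order.max (pup w) (1 - abar1) | w in W]).
Proof.
split.
- move=> Xt Z ps e a abar0 abar1 ps01 _ a01 e_a a_sum sup_gt0 _ abar0_01 _.
  move=> a0_le a1_le xt z.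
  have a_ge0 y xt' : 0 <= a y xt' by case/andP: (a01 y xt').
  exact: (p1_bounds ps01 a_ge0 e_a a_sum z (sup_gt0 xt) abar0_01
                    (a0_le xt) (a1_le xt)).
- move=> X W ps psW e abar0 abar1 _ W_neq0 ps01 _ e01 psW_ps e_decr e_sum pW01.
  move=> abar0_01 _ e0_le e1_le x.
  have e_ge0 y x' w : W w -> 0 <= e y x' w.
    by move=> Ww; case/andP: (e01 y x' w Ww).
  exact: (pW_bounds ps01 e_ge0 psW_ps e_decr e_sum pW01 W_neq0 abar0_01
                    (e0_le x) (e1_le x)).
Qed.
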